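(* Let $N\ge1$ be an integer, $\sigma^2>0$, $R>0$, $\gamma>0$ and $\alpha\in(0,1]$. Consider the problem $$\min_{p_0,\dots,p_{N-1}\ge0}\ \frac{\gamma}{N}\sum_{n=0}^{N-1}p_n^{\alpha}\quad\text{s.t.}\quad \frac1N\sum_{n=0}^{N-1}\log_2\!\left(1+\frac{p_n}{\sigma^2}\right)=R.$$ Then every optimal solution allocates equal power to all active slots: for all $n,n'$, if $p_n>0$ and $p_{n'}>0$ then $p_n=p_{n'}$. *)

From HB Require Import structures.
From mathcomp Require Import all_boot all_order all_algebra.
From mathcomp Require Import all_classical all_reals all_analysis.
Set Implicit Arguments. Unset Strict Implicit. Unset Printing Implicit Defensive.
Import Order.TTheory GRing.Theory Num.Theory.
Local Open Scope ring_scope.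

Definition log2 {R : realType} (x : R) : R := ln x / ln 2.

(* objective  (gamma / N) * sum_n p_n^alpha ; note powR 0 a = 0 for a <> 0 *)
Definition objective {R : realType} (N : nat) (gamma alpha : R) (p : 'I_N -> R) : R :=
  gamma / N%:R * \sum_(n < N) (p n `^ alpha).

Definition avg_rate {R : realType} (N : nat) (sigma2 : R) (p : 'I_N -> R) : R :=
  N%:R^-1 * \sum_(n < N) log2 (1 + p n / sigma2).

Definition feasible {R : realType} (N : nat) (sigma2 Rt : R) (p : 'I_N -> R) : Prop :=
  (forall n, 0 <= p n) /\ avg_rate sigma2 p = Rt.

Definition optimal {R : realType} (N : nat) (sigma2 Rt gamma alpha : R)
  (p : 'I_N -> R) : Prop :=
  feasible sigma2 Rt p /\
  forall q : 'I_N -> R, feasible sigma2 Rt q -> objective gamma alpha p <= objective gamma alpha q.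

From HB Require Import structures.
From mathcomp Require Import all_boot all_order all_algebra.
From mathcomp Require Import all_classical all_reals all_analysis.
From mathcomp Require Import ring lra.
Import Order.TTheory GRing.Theory Num.Theory.
Local Open Scope ring_scope.

(* Suppose an optimal allocation [p] had two active slots with [0 < p a < p b].
   The rate of the pair depends only on the product [(s + p a) * (s + p b) = P]
   (with [s = sigma2]), so moving the first power to [t] and the second to
   [partner t = P / (s + t) - s] keeps the allocation feasible.  The resulting
   pair cost [t^alpha + (partner t)^alpha] has no minimum strictly below the
   equal split [midpoint = sqrt P - s]: its derivative has the sign of a
   "balance" function which vanishes at the midpoint and, once nonpositive,
   stays negative (because [(s + t) * balance'] is nondecreasing), so the cost
   increases and then decreases on ]0, midpoint].  Hence [p a] can be moved to a
   cheaper [t] in ]0, midpoint], contradicting optimality. *)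

Section MeanValueArguments.
Context {R : realType}.
Implicit Types (f df F dF g : R -> R) (a b : R).

Lemma mvt_closed f df a b : a < b ->
  (forall x, a <= x <= b -> is_derive x 1 f (df x)) ->
  exists2 c, a < c < b & f b - f a = df c * (b - a).
Proof.
move=> ab fdf.
have [||c] := @MVT R f df a b ab.
- by move=> x; rewrite in_itv /= => /andP[ax xb]; apply: fdf; rewrite !ltW.
- apply: derivable_within_continuous => x; rewrite in_itv /= => xab.
  by have [] := fdf x xab.
- by rewrite in_itv /=; exists c.
Qed.

(* If [f b = 0] and [f'] can only change sign from [-] to [+] on ]a, b[
   (once nonnegative, it stays positive), then [f] is negative on ]t1, b[ as
   soon as [f t1 <= 0]: otherwise [f'] would be nonnegative somewhere in
   ]t1, t2[ and nonpositive somewhere in ]t2, b[. *)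
Lemma single_crossing f df a b :
  (forall x, a < x <= b -> is_derive x 1 f (df x)) ->
  (forall x y, a < x -> x < y -> y < b -> 0 <= df x -> 0 < df y) ->
  f b = 0 -> forall t1 t2, a < t1 -> t1 < t2 -> t2 < b -> f t1 <= 0 -> f t2 < 0.
Proof.
move=> fdf df_pos fb0 t1 t2 at1 t12 t2b ft1.
rewrite ltNge; apply/negP => ft2.
have fdf_in x : t1 <= x <= b -> is_derive x 1 f (df x).
  by move=> /andP[? ?]; apply: fdf; apply/andP; split; lra.
have [c1 /andP[c1a c1b] e1] : exists2 c, t1 < c < t2 & f t2 - f t1 = df c * (t2 - t1).
  by apply: mvt_closed => // x /andP[? ?]; apply: fdf_in; apply/andP; split; lra.
have [c2 /andP[c2a c2b] e2] : exists2 c, t2 < c < b & f b - f t2 = df c * (b - t2).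
  by apply: mvt_closed => // x /andP[? ?]; apply: fdf_in; apply/andP; split; lra.
have dfc1 : 0 <= df c1.
  have : 0 <= df c1 * (t2 - t1) by lra.
  by rewrite pmulr_lge0 // subr_gt0.
have dfc2 : df c2 <= 0.
  have : df c2 * (b - t2) <= 0 by lra.
  by rewrite pmulr_lle0 // subr_gt0.
have := df_pos c1 c2 ltac:(lra) ltac:(lra) c2b dfc1; lra.
Qed.

(* If the sign of [F'] on ]a, b[ is that of a function [g] which, once
   nonpositive, stays negative, then [F'] changes sign at most once, from
   [+] to [-]: [F] has no minimum inside ]a, b[, and every interior point can
   be strictly improved inside ]a, b]. *)
Lemma no_interior_minimum F dF g a b :
  (forall x, a < x <= b -> is_derive x 1 F (dF x)) ->
  (forall x, a < x < b -> (0 < g x -> 0 < dF x) /\ (g x < 0 -> dF x < 0)) ->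
  (forall t1 t2, a < t1 -> t1 < t2 -> t2 < b -> g t1 <= 0 -> g t2 < 0) ->
  forall t0, a < t0 -> t0 < b -> exists2 t1, a < t1 <= b & F t1 < F t0.
Proof.
move=> FdF sign_dF crossing t0 at0 t0b.
have FdF_in x y : a < x -> y <= b -> forall z, x <= z <= y -> is_derive z 1 F (dF z).
  by move=> ax yb z /andP[? ?]; apply: FdF; apply/andP; split; lra.
have [g_pos | g_nonpos] := ltrP 0 (g t0).
- (* [F] increases just left of [t0]: move down. *)
  exists ((a + t0) / 2); first by apply/andP; split; lra.
  have [c /andP[c1 c2] e] : exists2 c, (a + t0) / 2 < c < t0 &
      F t0 - F ((a + t0) / 2) = dF c * (t0 - (a + t0) / 2).
    by apply: mvt_closed; [lra | apply: (FdF_in _ _ _ (ltW t0b)); lra].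
  have g_c : 0 < g c.
    by rewrite ltNge; apply/negP => gc; have := crossing c t0 ltac:(lra) c2 t0b gc; lra.
  have [/(_ g_c) dF_c _] := sign_dF c ltac:(apply/andP; split; lra).
  have : 0 < dF c * (t0 - (a + t0) / 2) by apply: mulr_gt0; lra.
  lra.
- (* [F] decreases just right of [t0]: move up. *)
  exists ((t0 + b) / 2); first by apply/andP; split; lra.
  have [c /andP[c1 c2] e] : exists2 c, t0 < c < (t0 + b) / 2 &
      F ((t0 + b) / 2) - F t0 = dF c * ((t0 + b) / 2 - t0).
    by apply: mvt_closed; [lra | apply: (FdF_in _ _ at0); lra].
  have g_c : g c < 0 by apply: (crossing t0 c); lra.
  have [_ /(_ g_c) dF_c] := sign_dF c ltac:(apply/andP; split; lra).
  have : dF c * ((t0 + b) / 2 - t0) < 0 by rewrite pmulr_llt0 //; lra.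
  lra.
Qed.
End MeanValueArguments.

Section PairedSlots.
Context {R : realType}.
Variables (s P alpha : R).
Hypotheses (s_gt0 : 0 < s) (sP : s * s < P).

(* Keeping the product [(s + x) * (s + y) = P] fixed keeps the rate
   [log2 (1 + x / s) + log2 (1 + y / s)] of two slots fixed; [partner t] is
   the power of the second slot when the first one gets power [t]. *)
Definition partner (t : R) : R := P / (s + t) - s.

(* The symmetric allocation: [partner midpoint = midpoint]. *)
Definition midpoint : R := Num.sqrt P - s.

Definition pair_cost (t : R) : R := t `^ alpha + partner t `^ alpha.

Definition pair_cost_slope (t : R) : R :=
  alpha * t `^ (alpha - 1) + alpha * partner t `^ (alpha - 1) * (- P / (s + t) ^+ 2).

(* [balance t] has the sign of [pair_cost_slope t] (see [pair_cost_slope_sign]);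
   it is the log of the ratio of the two marginal costs per unit of rate. *)
Definition balance (t : R) : R :=
  (alpha - 1) * (ln t - ln (partner t)) + 2 * ln (s + t) - ln P.

Definition balance_slope (t : R) : R :=
  (2 * alpha + (alpha - 1) * s * (t^-1 + (partner t)^-1)) / (s + t).

Lemma shift_derive (t : R) : is_derive t 1 (fun y : R => s + y) 1.
Proof. by have := is_deriveD (is_derive_cst s t 1) (is_derive_id t 1); rewrite add0r. Qed.

Lemma partner_derive (t : R) : 0 < s + t -> is_derive t 1 partner (- P / (s + t) ^+ 2).
Proof.
move=> st; apply: is_derive_eq (is_deriveB (is_deriveZ P
  (is_deriveV (lt0r_neq0 st) (shift_derive t))) (is_derive_cst s t 1)) _.
by rewrite /GRing.scale /= mulr1 subr0 mulrN mulNr.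
Qed.

Lemma partner_prod (t : R) : 0 < s + t -> (s + t) * (s + partner t) = P.
Proof. by move=> st; rewrite /partner [s + (_ - s)]addrC subrK mulrC mulfVK // lt0r_neq0. Qed.

(* [s < sqrt P] is what makes the midpoint a positive power. *)
Lemma sqrtP_facts : s < Num.sqrt P /\ Num.sqrt P ^+ 2 = P.
Proof.
have P_gt0 : 0 < P by apply: lt_trans sP; exact: mulr_gt0.
have sqrtP2 : Num.sqrt P ^+ 2 = P by rewrite sqr_sqrtr // ltW.
split=> //; rewrite -(ltr_pXn2r (_ : (0 < 2)%N)) ?nnegrE ?sqrtr_ge0 ?ltW //.
by rewrite sqrtP2 expr2.
Qed.

Lemma partner_midpoint : partner midpoint = midpoint.
Proof.
have [ltsP sqrtP2] := sqrtP_facts.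
rewrite /partner /midpoint [s + (_ - s)]addrC subrK -{1}sqrtP2 expr2 mulfK // gt_eqF //.
exact: lt_trans ltsP.
Qed.

Lemma below_midpoint {t : R} : 0 < t -> t <= midpoint ->
  [/\ 0 < s + t, (s + t) ^+ 2 <= P & 0 < partner t].
Proof.
move=> t_gt0 t_le; have [ltsP sqrtP2] := sqrtP_facts.
have st : 0 < s + t by apply: addr_gt0.
have st_le : s + t <= Num.sqrt P by rewrite /midpoint lerBrDl in t_le.
have sqrtP_gt0 : 0 < Num.sqrt P := lt_trans s_gt0 ltsP.
split => //.
- by rewrite -sqrtP2 !expr2; apply: ler_pM => //; exact: ltW.
- rewrite /partner subr_gt0 ltr_pdivlMr // -sqrtP2 expr2.
  by have := s_gt0; nra.
Qed.

Lemma inv_sum_decreasing {x y : R} : 0 < x -> x < y -> y < midpoint ->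
  y^-1 + (partner y)^-1 < x^-1 + (partner x)^-1.
Proof.
move=> x_gt0 xy y_lt; have [ltsP sqrtP2] := sqrtP_facts; have s0 := s_gt0.
have sy_lt : (s + y) ^+ 2 < P.
  by rewrite -sqrtP2 !expr2; rewrite /midpoint in y_lt; nra.
have P_sx : 0 < P - s * (s + x) by nra.
have P_sy : 0 < P - s * (s + y) by nra.
have P_xy : 0 < P - (s + x) * (s + y) by nra.
have P_ss : 0 < P - s * s by nra.
have -> : x^-1 + (partner x)^-1 = (y^-1 + (partner y)^-1) +
    (y - x) * (P - (s + x) * (s + y)) * (P - s * s) /
    (x * y * (P - s * (s + x)) * (P - s * (s + y))).
  by rewrite /partner; field; rewrite !lt0r_neq0 //; lra.
rewrite ltrDl; apply: divr_gt0; first by rewrite !mulr_gt0 // subr_gt0.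
by rewrite !mulr_gt0 //; lra.
Qed.

Lemma pair_cost_derive (t : R) : 0 < t -> t <= midpoint ->
  is_derive t 1 pair_cost (pair_cost_slope t).
Proof.
move=> t_gt0 t_le; have [st _ y_gt0] := below_midpoint t_gt0 t_le.
exact (is_deriveD (is_derive1_powR alpha t_gt0)
  (is_derive1_comp (is_derive1_powR alpha y_gt0) (partner_derive t st))).
Qed.

Lemma balance_derive (t : R) : 0 < t -> t <= midpoint ->
  is_derive t 1 balance (balance_slope t).
Proof.
move=> t_gt0 t_le; have [st _ y_gt0] := below_midpoint t_gt0 t_le.
apply: is_derive_eq (is_deriveB (is_deriveD (is_deriveZ (alpha - 1)
    (is_deriveB (is_derive1_ln t_gt0)
       (is_derive1_comp (is_derive1_ln y_gt0) (partner_derive t st))))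
    (is_deriveZ 2 (is_derive1_comp (is_derive1_ln st) (shift_derive t))))
  (is_derive_cst (ln P) t 1)) _.
rewrite /balance_slope /GRing.scale /=.
move: (partner t) (partner_prod t st) y_gt0 => y <- y_gt0.
by field; rewrite !lt0r_neq0.
Qed.

Lemma balance_midpoint : balance midpoint = 0.
Proof.
have [ltsP sqrtP2] := sqrtP_facts.
rewrite /balance partner_midpoint subrr mulr0 add0r.
have -> : s + midpoint = Num.sqrt P by rewrite /midpoint [s + (_ - s)]addrC subrK.
by rewrite mulr_natl -lnXn ?sqrtP2 ?subrr // (lt_trans s_gt0).
Qed.

Hypotheses (alpha_gt0 : 0 < alpha) (alpha_le1 : alpha <= 1).

Lemma pair_cost_slope_sign (t : R) : 0 < t -> t <= midpoint ->
  (0 < balance t -> 0 < pair_cost_slope t) /\ (balance t < 0 -> pair_cost_slope t < 0).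
Proof.
move=> t_gt0 t_le; have [st _ y_gt0] := below_midpoint t_gt0 t_le.
have P_gt0 : 0 < P by apply: lt_trans sP; exact: mulr_gt0.
set A := t `^ (alpha - 1) * (s + t) ^+ 2; set B := partner t `^ (alpha - 1) * P.
have A_gt0 : 0 < A by rewrite mulr_gt0 ?exprn_gt0 ?powR_gt0.
have B_gt0 : 0 < B by rewrite mulr_gt0 ?powR_gt0.
have -> : pair_cost_slope t = alpha * (A - B) / (s + t) ^+ 2.
  by rewrite /pair_cost_slope /A /B; field; rewrite lt0r_neq0.
have -> : balance t = ln A - ln B.
  rewrite /balance /A /B !lnM ?posrE ?powR_gt0 ?exprn_gt0 // !ln_powR.
  by ring.
rewrite !subr_gt0 !subr_lt0 !ltr_ln ?posrE //; split=> AB.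
- by rewrite divr_gt0 ?exprn_gt0 // mulr_gt0 // subr_gt0.
- by rewrite pmulr_llt0 ?invr_gt0 ?exprn_gt0 // pmulr_rlt0 // subr_lt0.
Qed.

Lemma balance_slope_crossing (x y : R) : 0 < x -> x < y -> y < midpoint ->
  0 <= balance_slope x -> 0 < balance_slope y.
Proof.
move=> x_gt0 xy y_lt; have s0 := s_gt0; have a0 := alpha_gt0.
have [sx _ _] := below_midpoint x_gt0 (ltW (lt_trans xy y_lt)).
have [sy _ _] := below_midpoint (lt_trans x_gt0 xy) (ltW y_lt).
have Hxy := inv_sum_decreasing x_gt0 xy y_lt.
rewrite /balance_slope !pmulr_lge0 ?pmulr_lgt0 ?invr_gt0 //.
set Hx := x^-1 + _ in Hxy *; set Hy := y^-1 + _ in Hxy *.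
have [a_lt1 | a_ge1] := ltrP alpha 1; last first.
  have -> : alpha = 1 by apply/eqP; rewrite eq_le alpha_le1.
  by rewrite subrr !mul0r addr0 mulr1.
move=> Nx; have : 0 < (1 - alpha) * s * (Hx - Hy).
  by rewrite !mulr_gt0 // ?subr_gt0.
nra.
Qed.

Lemma pair_cost_improvable {t0 : R} : 0 < t0 -> t0 < midpoint ->
  exists2 t1, 0 < t1 <= midpoint & pair_cost t1 < pair_cost t0.
Proof.
have crossing : forall t1 t2, 0 < t1 -> t1 < t2 -> t2 < midpoint ->
    balance t1 <= 0 -> balance t2 < 0.
  apply: single_crossing balance_slope_crossing balance_midpoint.
  by move=> x /andP[x0 xm]; exact: balance_derive.
apply: no_interior_minimum crossing t0.
- by move=> x /andP[x0 xm]; exact: pair_cost_derive.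
- by move=> x /andP[x0 xm]; exact: pair_cost_slope_sign (ltW xm).
Qed.

End PairedSlots.

Lemma unequal_pair {R : realType} {s x y : R} : 0 < s -> 0 < x -> x < y ->
  let P := (s + x) * (s + y) in
  [/\ s * s < P, partner s P x = y & x < midpoint s P].
Proof.
move=> s_gt0 x_gt0 xy P; have sx_gt0 : 0 < s + x by lra.
split.
- by rewrite /P; nra.
- by rewrite /partner /P [(s + x) * _]mulrC mulfK ?lt0r_neq0 // addrC addKr.
- rewrite /midpoint ltrBrDl -[s + x]gtr0_norm // -sqrtr_sqr ltr_sqrt /P.
  + by rewrite expr2 ltr_pM2l //; lra.
  + by rewrite /P mulr_gt0 //; lra.
Qed.

Section TwoSlotExchange.
Context {R : realType} {N : nat}.
Implicit Types (p : 'I_N -> R) (a b : 'I_N) (x y : R).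

Definition update2 p a b x y : 'I_N -> R :=
  fun i => if i == a then x else if i == b then y else p i.

Lemma big_update2 (F : R -> R) p a b x y : a != b ->
  \sum_(i < N) F (update2 p a b x y i) + (F (p a) + F (p b)) =
  \sum_(i < N) F (p i) + (F x + F y).
Proof.
move=> ab; rewrite (bigD1 a) // [in RHS](bigD1 a) // (bigD1 b) 1?eq_sym //.
rewrite [in RHS](bigD1 b) 1?eq_sym //= /update2 eqxx eq_sym (negbTE ab) eqxx.
rewrite (eq_bigr (fun i => F (p i))); last first.
  by move=> i /andP[ia ib]; rewrite (negbTE ia) (negbTE ib).
by ring.
Qed.

Lemma rate_pair (s x y : R) : 0 < s -> 0 <= x -> 0 <= y ->
  log2 (1 + x / s) + log2 (1 + y / s) = log2 ((s + x) * (s + y) / s ^+ 2).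
Proof.
move=> s_gt0 x_ge0 y_ge0; have s_neq0 := lt0r_neq0 s_gt0.
have rate_gt0 v : 0 <= v -> 0 < 1 + v / s.
  by move=> v_ge0; rewrite ltr_wpDr // divr_ge0 // ltW.
rewrite /log2 -mulrDl -lnM ?posrE ?rate_gt0 //.
by congr (ln _ / _); field.
Qed.

Lemma feasible_update2 {s Rt : R} {p a b x y} : 0 < s -> a != b ->
  feasible s Rt p -> 0 <= x -> 0 <= y ->
  (s + x) * (s + y) = (s + p a) * (s + p b) -> feasible s Rt (update2 p a b x y).
Proof.
move=> s_gt0 ab [p_ge0 p_rate] x_ge0 y_ge0 same_prod; split.
  by move=> i; rewrite /update2; case: ifP => _ //; case: ifP.
rewrite -p_rate /avg_rate; congr (_ * _).
apply: (addIr (log2 (1 + p a / s) + log2 (1 + p b / s))).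
by rewrite (big_update2 (fun v => log2 (1 + v / s))) // !rate_pair // same_prod.
Qed.

Lemma objective_update2 (gamma alpha : R) p a b x y : 0 < gamma -> (0 < N)%N ->
  a != b -> x `^ alpha + y `^ alpha < p a `^ alpha + p b `^ alpha ->
  objective gamma alpha (update2 p a b x y) < objective gamma alpha p.
Proof.
move=> gamma_gt0 N_gt0 ab cheaper.
rewrite /objective ltr_pM2l ?divr_gt0 ?ltr0n //.
rewrite -(ltrD2r (p a `^ alpha + p b `^ alpha)).
by rewrite (big_update2 (fun v => v `^ alpha)) // ltrD2l.
Qed.

End TwoSlotExchange.

Theorem lemma3 (R : realType) (N : nat) (sigma2 Rt gamma alpha : R)
  (hN : (1 <= N)%N) (hsigma : 0 < sigma2) (hR : 0 < Rt) (hgamma : 0 < gamma)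
  (halpha0 : 0 < alpha) (halpha1 : alpha <= 1) (p : 'I_N -> R) :
  optimal sigma2 Rt gamma alpha p ->
  forall n n' : 'I_N, 0 < p n -> 0 < p n' -> p n = p n'.
Proof.
move=> [p_feasible p_optimal].
suff no_gap a b : 0 < p a -> p a < p b -> False.
  move=> n n' pn pn'; case: (ltgtP (p n) (p n')) => // lt.
  - by have [] := no_gap n n' pn lt.
  - by have [] := no_gap n' n pn' lt.
move=> pa_gt0 pab; have ab : a != b by apply: contraTneq pab => ->; rewrite ltxx.
have [sP partner_pa pa_lt] := unequal_pair hsigma pa_gt0 pab.
set P := (sigma2 + p a) * (sigma2 + p b) in sP partner_pa pa_lt.
have [t /andP[t_gt0 t_le] cheaper] :=
  pair_cost_improvable _ _ _ hsigma sP halpha0 halpha1 pa_gt0 pa_lt.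
have [st _ partner_t_gt0] := below_midpoint _ _ hsigma sP t_gt0 t_le.
pose q := update2 p a b t (partner sigma2 P t).
have q_feasible : feasible sigma2 Rt q := feasible_update2 hsigma ab p_feasible
  (ltW t_gt0) (ltW partner_t_gt0) (partner_prod _ _ _ st).
have := p_optimal q q_feasible; rewrite leNgt => /negP; apply.
apply: objective_update2 => //.
by move: cheaper; rewrite /pair_cost partner_pa.
Qed.
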